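(* For nonnegative integers $a\le A$, $b\le B$, $r$, $R$, let $E_{a,b,r}^{A,B,R}$ be the number of rank-$R$ matrices of size $A\times B$ over $\mathbb{Z}_D$ extending a (fixed, arbitrary) rank-$r$ matrix of size $a\times b$, and $E^{A,B,R}:=E_{0,0,0}^{A,B,R}$. Then $E^{A,B,R}=\Theta(1)\cdot D^{(A+B)R-R^2}$ and $E_{a,b,r}^{A,B,R}=O(1)\cdot D^{(A+B-b)R-br-R^2+(b-a+r+R)^2/4}$.
   Context: $D$ is an odd prime and $\mathbb{Z}_D$ the field with $D$ elements. An $A\times B$ matrix extends an $a\times b$ matrix $M$ if its upper-left $a\times b$ submatrix equals $M$. The implied constants in $\Theta(1)$, $O(1)$ do not depend on $A,B,R,a,b,r$. *)

From mathcomp Require Import all_boot all_order all_algebra.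
Set Implicit Arguments. Unset Strict Implicit. Unset Printing Implicit Defensive.
Import GRing.Theory.

(* E_{a,b,r}^{A,B,R} for the fixed matrix M: number of rank-R A x B matrices over
   Z_D (= 'F_D for D prime) extending M. *)
Definition ext_count (D A B a b Rk : nat) (Ha : (a <= A)%N) (Hb : (b <= B)%N)
  (M : 'M['F_D]_(a, b)) : nat :=
  #|[set N : 'M['F_D]_(A, B) | (\rank N == Rk) &&
      [forall i : 'I_a, forall j : 'I_b, N (widen_ord Ha i) (widen_ord Hb j) == M i j]]|.

Definition full_count (D A B Rk : nat) : nat :=
  @ext_count D A B 0 0 Rk (leq0n A) (leq0n B) 0%R.

(* Appending a row v to a matrix P raises its rank by one exactly when v lies
   outside the row space of P, which has q^(rank P) elements.  The resulting
   recurrence in the number p of appended rows is solved by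
     #{Y | rank (P0 over Y) = r + k} * prod_(i<k) (q^k - q^i)
       = q^(p r) * prod_(i<k) (q^p - q^i) * prod_(i<k) (q^(n-r) - q^i)
   (P0 has n columns and rank r), and for q >= 3 each product
   prod_(i<k) (q^m - q^i) lies between q^(m k)/2 and q^(m k).  Hence that count
   is q^(p s + (n - s)(s - r)), s = r + k, up to a factor 4; for r = 0 this is
   the first estimate.
   An A x B extension of the a x b matrix M of rank r is its first b columns L,
   an extension of M by A - a rows, followed by B - b columns extending L^T.
   Summing over s = rank L, the two estimates multiply to q^(T - (s - c)^2) with
   c = (b - a + r + R)/2 and T the claimed exponent, and the Gaussian sum of
   q^(-(s - c)^2) over integers s is at most 2q. *)

From HB Require Import structures.
From Stdlib Require Import Reals Lra Lia ZArith.
From mathcomp Require Import all_boot all_order all_algebra.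
Set Implicit Arguments. Unset Strict Implicit. Unset Printing Implicit Defensive.
Import GRing.Theory.

Section RankExtensions.
Variable F : finFieldType.
Local Notation q := #|F|.
Local Open Scope ring_scope.

Lemma card_rowspace m n (P : 'M[F]_(m, n)) :
  #|[set v : 'rV[F]_n | (v <= P)%MS]| = (q ^ \rank P)%nat.
Proof.
transitivity #|[set u *m row_base P | u in 'rV[F]_(\rank P)]|.
  apply: eq_card => v; rewrite !inE; apply/idP/imsetP => [|[u _ ->]].
    by rewrite -(eq_row_base P) => /submxP [u ->]; exists u.
  by rewrite -(eq_row_base P) submxMl.
rewrite card_imset ?card_mx ?mul1n //.
have [B AB1] := row_freeP (row_base_free P); apply: can_inj (mulmx^~ B) _ => v.
by rewrite -mulmxA AB1 mulmx1.
Qed.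

Lemma mxrank_col_mx_row m n (P : 'M[F]_(m, n)) (v : 'rV[F]_n) :
  \rank (col_mx P v) = if (v <= P)%MS then \rank P else (\rank P).+1.
Proof.
rewrite -addsmxE; case: ifPn => vP; first by rewrite (addsmx_idPl vP).
apply/eqP; rewrite eqn_leq; apply/andP; split.
  apply: leq_trans (mxrank_adds_leqif P v) _.
  by rewrite -[X in (_ <= X)%nat]addn1 leq_add2l rank_leq_row.
by rewrite (ltn_leqif (mxrank_leqif_sup _)) ?addsmxSl // addsmx_sub submx_refl.
Qed.

Lemma card_rank_col_mx_row m n (P : 'M[F]_(m, n)) s :
  #|[set v : 'rV[F]_n | \rank (col_mx P v) == s]| =
  ((if \rank P == s then q ^ s else 0) +
   (if (\rank P).+1 == s then q ^ n - q ^ \rank P else 0))%nat.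
Proof.
have [<-|ne1] := eqVneq (\rank P) s.
  rewrite eqn_leq ltnn addn0 -(card_rowspace P); apply: eq_card => v.
  by rewrite !inE mxrank_col_mx_row; case: ifP; rewrite ?eqxx // eqn_leq ltnn.
have [<-|ne2] := eqVneq (\rank P).+1 s.
  have -> : (q ^ n = #|{: 'rV[F]_n}|)%nat by rewrite card_mx mul1n.
  rewrite add0n -(card_rowspace P).
  transitivity #|~: [set v : 'rV[F]_n | (v <= P)%MS]|; last by rewrite cardsCs setCK.
  apply: eq_card => v; rewrite !inE mxrank_col_mx_row.
  by case: ifP; rewrite ?eqxx // eqn_leq ltnn andbF.
apply/eqP; rewrite cards_eq0; apply/eqP/setP => v.
by rewrite !inE mxrank_col_mx_row; case: ifP => _; rewrite ?(negPf ne1) ?(negPf ne2).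
Qed.

Definition nrank_ext m n (P0 : 'M[F]_(m, n)) (p s : nat) : nat :=
  #|[set Y : 'M[F]_(p, n) | \rank (col_mx P0 Y) == s]|.

Lemma mxrank_col_mx_perm m1 m2 m3 n (A : 'M[F]_(m1, n)) (B : 'M[F]_(m2, n))
    (C : 'M[F]_(m3, n)) :
  \rank (col_mx A (col_mx B C)) = \rank (col_mx (col_mx A C) B).
Proof.
rewrite -!addsmxE -(adds_eqmx (eqmx_refl A) (addsmxE B C)).
by rewrite -(adds_eqmx (addsmxE A C) (eqmx_refl B)) -addsmxA (addsmxC C B).
Qed.

Lemma nrank_extS m n (P0 : 'M[F]_(m, n)) p s :
  nrank_ext P0 p.+1 s = (q ^ s * nrank_ext P0 p s +
     (if s is s'.+1 then (q ^ n - q ^ s') * nrank_ext P0 p s' else 0))%nat.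
Proof.
rewrite /nrank_ext -sum1_card (partition_big (@dsubmx F 1 p n) xpredT) //=.
rewrite (eq_bigr (fun Y => #|[set v : 'rV[F]_n |
    \rank (col_mx (col_mx P0 Y) v) == s]|)); last first.
  move=> Y _; rewrite (reindex (col_mx^~ Y)) /=; last first.
    exists usubmx => [v _ | vY]; first by rewrite col_mxKu.
    by case/andP=> _ /eqP <-; rewrite vsubmxK.
  rewrite -sum1_card; apply: eq_bigl => v.
  rewrite !inE col_mxKd eqxx andbT; congr (_ == _).
  exact: (mxrank_col_mx_perm P0 v Y).
under eq_bigr do rewrite card_rank_col_mx_row.
rewrite big_split /= -!big_mkcond sum_nat_cond_const mulnC; congr (_ + _)%nat.
case: s => [|s]; first by rewrite big_pred0.
rewrite (eq_bigr (fun=> q ^ n - q ^ s)%nat) => [|Y /eqP[->]//].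
by under eq_bigl do rewrite eqSS; rewrite sum_nat_cond_const mulnC.
Qed.

Lemma nrank_ext0 m n (P0 : 'M[F]_(m, n)) s : nrank_ext P0 0 s = (\rank P0 == s).
Proof.
have rk0 (Y : 'M[F]_(0, n)) : \rank (col_mx P0 Y) = \rank P0.
  by rewrite -addsmxE [Y]flatmx0 addsmx0.
rewrite /nrank_ext; case: eqP => [<-|ne].
  by rewrite -[RHS](card_mx F 0 n); apply: eq_card => Y; rewrite !inE rk0 eqxx.
by apply/eqP; rewrite cards_eq0; apply/eqP/setP => Y; rewrite !inE rk0; apply/eqP.
Qed.

Lemma nrank_ext_eq0 m n (P0 : 'M[F]_(m, n)) p s :
  [|| s < \rank P0, n < s | m + p < s]%nat -> nrank_ext P0 p s = 0%nat.
Proof.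
move=> out; apply/eqP; rewrite cards_eq0; apply/eqP/setP => Y; rewrite !inE.
apply: contraTF out => /eqP <-; rewrite !negb_or -!leqNgt.
by rewrite rank_leq_col rank_leq_row -addsmxE mxrankS ?addsmxSl.
Qed.

Lemma ulsubmxE a p b p' (N : 'M[F]_(a + p, b + p')) :
  ulsubmx N = usubmx (lsubmx N).
Proof. by apply/matrixP => i j; rewrite !mxE. Qed.

Lemma ulsubmx_eqE a p b p' (Ha : (a <= a + p)%nat) (Hb : (b <= b + p')%nat)
    (M : 'M[F]_(a, b)) (N : 'M[F]_(a + p, b + p')) :
  [forall i, forall j, N (widen_ord Ha i) (widen_ord Hb j) == M i j] =
  (ulsubmx N == M).
Proof.
apply/forallP/eqP => [NM | <- i]; last first.
  by apply/forallP => j; rewrite !mxE; apply/eqP; congr (N _ _); apply: val_inj.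
apply/matrixP => i j; rewrite !mxE; have /eqP <- := forallP (NM i) j.
by congr (N _ _); apply: val_inj.
Qed.

Lemma card_rank_row_mx k n p' (L : 'M[F]_(k, n)) s :
  #|[set X : 'M[F]_(k, p') | \rank (row_mx L X) == s]| = nrank_ext L^T p' s.
Proof.
rewrite /nrank_ext -(card_imset _ (@trmx_inj _ _ _)); apply: eq_card => Y.
rewrite !inE; apply/imsetP/idP => [[X] | rY].
  by rewrite inE => rX ->; rewrite -mxrank_tr tr_col_mx !trmxK.
by exists Y^T; rewrite ?trmxK // inE -mxrank_tr tr_row_mx trmxK.
Qed.

Lemma card_rank_ulsubmx a p b p' (M : 'M[F]_(a, b)) s :
  #|[set N : 'M[F]_(a + p, b + p') | (\rank N == s) && (ulsubmx N == M)]| =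
  (\sum_(L : 'M[F]_(a + p, b) | usubmx L == M) nrank_ext L^T p' s)%nat.
Proof.
rewrite -sum1_card (partition_big (@lsubmx F _ b p') (fun L => usubmx L == M)) /=;
  last by move=> N; rewrite inE ulsubmxE => /andP[].
apply: eq_bigr => L /eqP LM; rewrite -card_rank_row_mx (reindex (row_mx L)) /=.
  rewrite -sum1_card; apply: eq_bigl => X.
  by rewrite !inE row_mxKl ulsubmxE row_mxKl LM !eqxx !andbT.
exists rsubmx => [X _ | N]; first by rewrite row_mxKr.
by case/andP => _ /eqP <-; rewrite hsubmxK.
Qed.

Lemma card_rank_usubmx a p b (M : 'M[F]_(a, b)) s :
  #|[set L : 'M[F]_(a + p, b) | (usubmx L == M) && (\rank L == s)]| =
  nrank_ext M p s.
Proof.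
rewrite /nrank_ext -(card_imset _ (can_inj (@col_mxKd F a p b M))); apply: eq_card => L.
rewrite !inE; apply/andP/imsetP => [[/eqP LM rL] | [Y]].
  by exists (dsubmx L); rewrite ?inE -LM vsubmxK.
by rewrite inE => rY ->; rewrite col_mxKu.
Qed.

Lemma partition_big_mxrank k b (P : pred 'M[F]_(k, b)) (f : 'M[F]_(k, b) -> nat) :
  (\sum_(L | P L) f L = \sum_(s < b.+1) \sum_(L | P L && (\rank L == s)) f L)%nat.
Proof.
rewrite (partition_big (fun L => inord (\rank L) : 'I_b.+1) xpredT) //=.
apply: eq_bigr => s _; apply: eq_bigl => L; congr (_ && _).
have rL : (\rank L < b.+1)%nat by rewrite ltnS rank_leq_col.
by apply/eqP/eqP => [<- | rs]; [rewrite inordK | apply: val_inj; rewrite /= inordK].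
Qed.

End RankExtensions.

Local Open Scope R_scope.

Lemma INR_addn (a b : nat) : INR (a + b)%nat = INR a + INR b.
Proof. by rewrite -plusE plus_INR. Qed.

Lemma INR_muln (a b : nat) : INR (a * b)%nat = INR a * INR b.
Proof. by rewrite -multE mult_INR. Qed.

Lemma INR_subn (a b : nat) : (b <= a)%nat -> INR (a - b)%nat = INR a - INR b.
Proof. by move/leP => ba; rewrite -minusE minus_INR. Qed.

Lemma INR_expn (a b : nat) : INR (expn a b) = INR a ^ b.
Proof. by elim: b => [|b IH] //; rewrite expnS INR_muln IH. Qed.

Lemma pow_addn (x : R) (a b : nat) : x ^ (a + b)%nat = x ^ a * x ^ b.
Proof. by rewrite -plusE pow_add. Qed.

(* Makes the bigop lemmas that need a monoid law available for real sums. *)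
HB.instance Definition _ := Monoid.isComLaw.Build R 0 Rplus
  (fun x y z => esym (Rplus_assoc x y z)) Rplus_comm Rplus_0_l.

Lemma INR_sum_le (I : finType) (P : pred I) (f : I -> nat) (g : I -> R) :
  (forall i, P i -> INR (f i) <= g i) ->
  INR (\sum_(i | P i) f i) <= \big[Rplus/0]_(i | P i) g i.
Proof.
rewrite (big_morph INR INR_addn (erefl (INR 0))) => fg.
by apply: (big_ind2 Rle) => [|*|//]; [apply: Rle_refl | apply: Rplus_le_compat].
Qed.

Lemma big_Rplus_const (I : finType) (P : pred I) (U : R) :
  \big[Rplus/0]_(i | P i) U = INR #|[set i | P i]| * U.
Proof.
rewrite -sum1dep_card (big_morph INR INR_addn (erefl (INR 0))).
by apply: (big_ind2 (fun x y => x = y * U)) => [|x1 y1 x2 y2 -> ->|i _] /=; ring.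
Qed.

Section QProd.
Variable Q : R.
Hypothesis Q_ge3 : 3 <= Q.

Fixpoint qprod (m k : nat) : R :=
  if k is k'.+1 then qprod m k' * (Q ^ m - Q ^ k') else 1.

Lemma pow_Q_ge1 k : 1 <= Q ^ k.
Proof. by rewrite -(pow1 k); apply: pow_incr; lra. Qed.

Lemma pow_Q_le a b : (a <= b)%nat -> Q ^ a <= Q ^ b.
Proof. by move/leP => ab; apply: Rle_pow => //; lra. Qed.

Lemma qprodSS m k : qprod m.+1 k.+1 = (Q ^ m.+1 - 1) * Q ^ k * qprod m k.
Proof. by elim: k => [|k /= ->] /=; ring. Qed.

Lemma qprod_eq0 m k : (m < k)%nat -> qprod m k = 0.
Proof.
elim: k => // k IH; rewrite ltnS leq_eqVlt => /orP[/eqP-> | mk] /=.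
  by rewrite Rminus_diag Rmult_0_r.
by rewrite IH ?Rmult_0_l.
Qed.

Lemma qprod_bounds m k : 0 <= qprod m k <= Q ^ (m * k).
Proof.
have [km | mk] := leqP k m; last first.
  by rewrite qprod_eq0 //; have := pow_Q_ge1 (m * k); lra.
elim: k km => [|k IH] km /=; first by rewrite muln0 /=; lra.
have [p0 pk] := IH (ltnW km); have := pow_Q_le (ltnW km).
have := pow_Q_ge1 k; rewrite mulnS pow_addn; nra.
Qed.

(* Weierstrass' inequality prod (1 - x_i) >= 1 - sum x_i for x_i = Q^(i - m),
   with sum_(i < k) Q^(i - m) = (Q^k - 1) / ((Q - 1) Q^m) <= 1/2. *)
Lemma qprod_ge m k : (k <= m)%nat -> Q ^ (m * k) / 2 <= qprod m k.
Proof.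
move=> km; have Qm1 := pow_Q_ge1 m.
suff W : Q ^ (m * k) * ((Q - 1) * Q ^ m - Q ^ k + 1) <= qprod m k * ((Q - 1) * Q ^ m).
  have Qkm := pow_Q_le km; have Qmk := pow_Q_ge1 (m * k).
  apply: (Rmult_le_reg_r ((Q - 1) * Q ^ m)); first nra.
  apply: Rle_trans W; have : (Q - 1) * Q ^ m / 2 - Q ^ k + 1 >= 0 by nra.
  nra.
elim: k km => [|k IH] km /=; first by rewrite muln0 /=; lra.
have {}IH := IH (ltnW km); have Qkm := pow_Q_le (ltnW km).
have Qk1 := pow_Q_ge1 k; have Qmk := pow_Q_ge1 (m * k).
rewrite mulnS pow_addn.
move: (Q ^ k) (Q ^ m) (Q ^ (m * k)) (qprod m k) Qk1 Qm1 Qmk Qkm IH => Y M Z P.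
move=> Y1 M1 Z1 YM IH.
have YM' : 0 <= M - Y by lra.
have := Rmult_le_compat_r _ _ _ YM' IH; have : 0 <= Z * (Y * Y - Y) by apply: Rmult_le_pos; nra.
nra.
Qed.

End QProd.

(* log_Q of the number, up to a factor 4, of ways to extend a rank-[r] matrix
   with [n] columns by [p] rows to a matrix of rank [s]. *)
Definition ext_exponent n r p s : R :=
  INR p * INR s + (INR n - INR s) * (INR s - INR r).

Section RankExtensionBounds.
Variable F : finFieldType.
Let Q := INR #|F|.
Hypothesis Q_ge3 : 3 <= Q.

Lemma INR_nrank_extS m n (P0 : 'M[F]_(m, n)) p s :
  INR (nrank_ext P0 p.+1 s) = Q ^ s * INR (nrank_ext P0 p s) +
    (if s is s'.+1 then (Q ^ n - Q ^ s') * INR (nrank_ext P0 p s') else 0).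
Proof.
rewrite nrank_extS INR_addn INR_muln INR_expn; congr (_ + _); case: s => // s.
have [sn | ns] := leqP s n; last by rewrite nrank_ext_eq0 /= ?muln0 ?Rmult_0_r // ns orbT.
rewrite INR_muln INR_subn ?INR_expn // leq_pexp2l //.
by apply/card_gt0P; exists (@GRing.zero F).
Qed.

Lemma nrank_ext_closed m n (P0 : 'M[F]_(m, n)) p k :
  INR (nrank_ext P0 p (\rank P0 + k)) * qprod Q k k =
  Q ^ (p * \rank P0) * qprod Q p k * qprod Q (n - \rank P0) k.
Proof.
have below_rank p' : (if \rank P0 is r.+1 then
    (Q ^ n - Q ^ r) * INR (nrank_ext P0 p' r) else 0) = 0.
  by case Er: (\rank P0) => [|r] //; rewrite nrank_ext_eq0 ?Er ?ltnSn //= Rmult_0_r.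
elim: p k => [|p IH] [|k].
- by rewrite nrank_ext0 addn0 eqxx /=; ring.
- by rewrite nrank_ext0 (@qprod_eq0 Q 0) // -{1}[\rank P0]addn0 eqn_add2l /=; ring.
- have := IH 0%nat; rewrite addn0 INR_nrank_extS below_rank /= !Rmult_1_r => ->.
  by rewrite mulSn pow_addn; ring.
have IH1 := IH k.+1; rewrite addnS in IH1.
rewrite addnS INR_nrank_extS Rmult_plus_distr_r.
transitivity (Q ^ (\rank P0 + k).+1 * (INR (nrank_ext P0 p (\rank P0 + k).+1) * qprod Q k.+1 k.+1)
  + (Q ^ n - Q ^ (\rank P0 + k)) * ((Q ^ k.+1 - 1) * Q ^ k)
    * (INR (nrank_ext P0 p (\rank P0 + k)) * qprod Q k k)); first by rewrite qprodSS; ring.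
have Qn : Q ^ n = Q ^ \rank P0 * Q ^ (n - \rank P0).
  by rewrite -pow_addn subnKC // rank_leq_col.
by rewrite IH1 IH qprodSS /= Qn mulSn !pow_addn /=; ring.
Qed.

Lemma Q_gt0 : 0 < Q. Proof. lra. Qed.

Lemma pow_Q_Rpower e : Q ^ e = Rpower Q (INR e).
Proof. by rewrite Rpower_pow //; apply: Q_gt0. Qed.

Lemma ext_exponentE n r p k : (r + k <= n)%nat ->
  Rpower Q (ext_exponent n r p (r + k)) * Q ^ (k * k) =
  Q ^ (p * r) * Q ^ (p * k) * Q ^ ((n - r) * k).
Proof.
move=> rkn; rewrite !pow_Q_Rpower -!Rpower_plus !INR_muln INR_subn ?(leq_trans (leq_addr k r)) //.
by rewrite /ext_exponent INR_addn; congr Rpower; ring.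
Qed.

Lemma nrank_ext_le m n (P0 : 'M[F]_(m, n)) p s :
  INR (nrank_ext P0 p s) <= 2 * Rpower Q (ext_exponent n (\rank P0) p s).
Proof.
have [/andP[rs sn] | out] := boolP (\rank P0 <= s <= n)%nat; last first.
  rewrite nrank_ext_eq0 /=.
    by have := exp_pos (ext_exponent n (\rank P0) p s * ln Q); rewrite /Rpower; lra.
  by apply: contraR out; rewrite !negb_or -!leqNgt => /and3P[-> -> _].
move: sn; have [k -> rkn] : exists k, s = (\rank P0 + k)%nat.
  by exists (s - \rank P0)%nat; rewrite subnKC.
have C := nrank_ext_closed P0 p k; have Ek := ext_exponentE p rkn.
have [U0 U1] := qprod_bounds Q_ge3 p k; have [V0 V1] := qprod_bounds Q_ge3 (n - \rank P0) k.
have W0 := qprod_ge Q_ge3 (leqnn k); have X0 := pos_INR (nrank_ext P0 p (\rank P0 + k)).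
have Kk := pow_Q_ge1 Q_ge3 (k * k); have Kr := pow_Q_ge1 Q_ge3 (p * \rank P0).
apply: (Rmult_le_reg_r (Q ^ (k * k))); first lra.
rewrite Rmult_assoc Ek; apply: Rle_trans (_ : _ <= 2 * (INR (nrank_ext P0 p (\rank P0 + k)) * qprod Q k k)) _.
  by nra.
rewrite C !Rmult_assoc; apply: Rmult_le_compat_l; first lra.
apply: Rmult_le_compat_l; first lra.
by apply: Rmult_le_compat.
Qed.

Lemma nrank_ext_ge m n (P0 : 'M[F]_(m, n)) p s :
  (\rank P0 <= s <= n)%nat -> (s - \rank P0 <= p)%nat ->
  Rpower Q (ext_exponent n (\rank P0) p s) / 4 <= INR (nrank_ext P0 p s).
Proof.
case/andP=> rs; have [k -> rkn] : exists k, s = (\rank P0 + k)%nat.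
  by exists (s - \rank P0)%nat; rewrite subnKC.
rewrite addKn => kp; have kn : (k <= n - \rank P0)%nat by rewrite leq_subRL ?rank_leq_col.
have C := nrank_ext_closed P0 p k; have Ek := ext_exponentE p rkn.
have U0 := qprod_ge Q_ge3 kp; have V0 := qprod_ge Q_ge3 kn.
have [W0 W1] := qprod_bounds Q_ge3 k k; have X0 := pos_INR (nrank_ext P0 p (\rank P0 + k)).
have Kk := pow_Q_ge1 Q_ge3 (k * k); have Kr := pow_Q_ge1 Q_ge3 (p * \rank P0).
have K1 := pow_Q_ge1 Q_ge3 (p * k); have K2 := pow_Q_ge1 Q_ge3 ((n - \rank P0) * k).
apply: (Rmult_le_reg_r (Q ^ (k * k))); first lra.
rewrite /Rdiv Rmult_assoc (Rmult_comm (/ 4)) -Rmult_assoc Ek.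
apply: Rle_trans (_ : _ <= INR (nrank_ext P0 p (\rank P0 + k)) * qprod Q k k) _; last by nra.
rewrite C !Rmult_assoc; apply: Rmult_le_compat_l; first lra.
nra.
Qed.

End RankExtensionBounds.

Lemma INR_distn (s m : nat) : INR (s - m + (m - s)) = Rabs (INR s - INR m).
Proof.
have [sm | ms] := leqP s m.
  have /leP/le_INR := sm; rewrite (eqP sm) add0n INR_subn // => ?.
  by rewrite Rabs_left1; [ring | lra].
have /leP/le_INR := ltnW ms; rewrite (eqP (ltnW ms)) addn0 INR_subn ?(ltnW ms) // => ?.
by rewrite Rabs_right; [ring | lra].
Qed.

Lemma nearest_nat (c : R) : exists m : nat, forall s : nat,
  INR (s - m + (m - s)) - 1/2 <= Rabs (INR s - c).
Proof.
have [c_lt_up up_le] := archimed (c - 1/2); set z := up (c - 1/2) in c_lt_up up_le.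
exists (Z.to_nat z) => s; rewrite INR_distn.
have [z0 | z0] := Z.le_gt_cases 0 z.
  rewrite [INR (Z.to_nat z)]INR_IZR_INZ Z2Nat.id //.
  have := Rabs_triang (INR s - c) (c - IZR z); have : Rabs (c - IZR z) <= 1/2 by apply: Rabs_le; lra.
  by rewrite (_ : INR s - c + (c - IZR z) = INR s - IZR z); [lra | ring].
have -> : Z.to_nat z = 0%nat by lia.
have s0 := pos_INR s; have zm1 : IZR z <= -1 by apply: IZR_le; lia.
by rewrite /= Rminus_0_r !Rabs_right; lra.
Qed.

Lemma sum_pow_distn_le (x : R) (m N : nat) : 0 <= x < 1 ->
  \big[Rplus/0]_(s < N) x ^ (s - m + (m - s)) <= (x ^ (m - N) * x + 1 - x ^ (N - m)) / (1 - x).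
Proof.
move=> [x0 x1]; elim: N => [|N IH].
  rewrite big_ord0 subn0 sub0n /=; have := pow_le x m x0.
  by move=> xm; apply: Rmult_le_pos; [nra | apply/Rlt_le/Rinv_0_lt_compat; lra].
rewrite big_ord_recr /=; apply: Rle_trans (Rplus_le_compat_r _ _ _ IH) _.
have [Nm | mN] := ltnP N m.
  rewrite (eqP (ltnW Nm)) (eqP Nm) add0n -(subnSK Nm) /=.
  by right; field; lra.
rewrite (eqP mN) (eqP (leq_trans mN (leqnSn N))) subSn //= addn0.
by right; field; lra.
Qed.

Lemma sum_pow_distn_le2 (x : R) (m N : nat) : 0 <= x <= 1/3 ->
  \big[Rplus/0]_(s < N) x ^ (s - m + (m - s)) <= 2.
Proof.
move=> [x0 x13]; apply: Rle_trans (@sum_pow_distn_le x m N _) _; first lra.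
have := pow_le x (m - N) x0; have := pow_le x (N - m) x0.
have : x ^ (m - N) <= 1 by rewrite -(pow1 (m - N)); apply: pow_incr; lra.
have : x ^ (N - m) <= 1 by rewrite -(pow1 (N - m)); apply: pow_incr; lra.
move=> b1 a1 b0 a0; apply: (Rmult_le_reg_r (1 - x)); first lra.
by rewrite /Rdiv Rmult_assoc Rinv_l; nra.
Qed.

Lemma sum_Rpower_sq_le (Q c : R) (N : nat) : 3 <= Q ->
  \big[Rplus/0]_(s < N) Rpower Q (- (INR s - c) ^ 2) <= 2 * Q.
Proof.
move=> Q_ge3; have [m near_m] := nearest_nat c.
have term_le s : Rpower Q (- (INR s - c) ^ 2) <= Q * (/ Q) ^ (s - m + (m - s)).
  have -> : Q * (/ Q) ^ (s - m + (m - s)) = Rpower Q (1 - INR (s - m + (m - s))).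
    by rewrite /Rminus Rpower_plus Rpower_Ropp Rpower_pow ?Rpower_1 ?pow_inv; lra.
  apply: Rle_Rpower; first lra.
  have := near_m s; have := Rabs_pos (INR s - c); rewrite -(pow2_abs (INR s - c)).
  move: (Rabs (INR s - c)) (INR (s - m + (m - s))) => u d; nra.
apply: Rle_trans (_ : _ <= Q * \big[Rplus/0]_(s < N) (/ Q) ^ (s - m + (m - s))) _.
  by apply: (big_ind2 (fun a b => a <= Q * b)) => [|*|s _]; [lra | lra | apply: term_le].
have x13 : 0 <= / Q <= 1/3.
  split; first by apply/Rlt_le/Rinv_0_lt_compat; lra.
  by rewrite /Rdiv Rmult_1_l; apply: Rinv_le_contravar; lra.
have := sum_pow_distn_le2 m N x13; nra.
Qed.

Section RankCounts.
Variable F : finFieldType.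
Let Q := INR #|F|.
Hypothesis Q_ge3 : 3 <= Q.

Lemma card_rank_mx A B (k : nat) :
  #|[set N : 'M[F]_(A, B) | \rank N == k]| = nrank_ext (GRing.zero : 'M[F]_(0, B)) A k.
Proof. by apply: eq_card => N; rewrite !inE -addsmxE adds0mx. Qed.

Lemma card_rank_mx_le A B k :
  INR #|[set N : 'M[F]_(A, B) | \rank N == k]| <=
  2 * Rpower Q ((INR A + INR B) * INR k - INR k ^ 2).
Proof.
rewrite card_rank_mx; apply: Rle_trans (nrank_ext_le Q_ge3 _ _ _) _.
by rewrite mxrank0 /ext_exponent /=; right; congr (_ * Rpower _ _); ring.
Qed.

Lemma card_rank_mx_ge A B k : (k <= minn A B)%nat ->
  Rpower Q ((INR A + INR B) * INR k - INR k ^ 2) / 4 <=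
  INR #|[set N : 'M[F]_(A, B) | \rank N == k]|.
Proof.
rewrite leq_min => /andP[kA kB]; rewrite card_rank_mx.
have := @nrank_ext_ge F Q_ge3 0 B GRing.zero A k; rewrite mxrank0 subn0 kB kA.
move=> /(_ isT isT); apply: Rle_trans; right.
by rewrite /ext_exponent /=; congr (Rpower _ _ / _); ring.
Qed.

Lemma card_rank_ulsubmx_le a p b p' (M : 'M[F]_(a, b)) k :
  INR #|[set N : 'M[F]_(a + p, b + p') | (\rank N == k) && (ulsubmx N == M)]| <=
  8 * Q * Rpower Q ((INR a + INR p + INR p') * INR k - INR b * INR (\rank M) - INR k ^ 2
                    + (INR b - INR a + INR (\rank M) + INR k) ^ 2 / 4).
Proof.
set T := (X in Rpower Q X); set c := (INR b - INR a + INR (\rank M) + INR k) / 2.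
have per_rank (s : 'I_b.+1) :
  INR (\sum_(L : 'M[F]_(a + p, b) | (usubmx L == M) && (\rank L == s)) nrank_ext L^T p' k) <=
  4 * Rpower Q T * Rpower Q (- (INR s - c) ^ 2).
  apply: Rle_trans (INR_sum_le (g := fun=> 2 * Rpower Q (ext_exponent (a + p) s p' k)) _) _.
    by move=> L /andP[_ /eqP <-]; rewrite -mxrank_tr; apply: nrank_ext_le.
  rewrite big_Rplus_const card_rank_usubmx.
  have E0 := exp_pos (ext_exponent (a + p) s p' k * ln Q).
  apply: Rle_trans (Rmult_le_compat_r _ _ _ _ (nrank_ext_le Q_ge3 M p s)) _; first by rewrite /Rpower; lra.
  have two_mul x y : 2 * Rpower Q x * (2 * Rpower Q y) = 4 * Rpower Q (x + y).
    by rewrite Rpower_plus; ring.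
  rewrite two_mul Rmult_assoc -Rpower_plus; right; congr (_ * Rpower _ _).
  by rewrite /T /c /ext_exponent INR_addn; field.
rewrite card_rank_ulsubmx (partition_big_mxrank (fun L => usubmx L == M)).
apply: Rle_trans (_ : _ <= 4 * Rpower Q T * \big[Rplus/0]_(s < b.+1) Rpower Q (- (INR s - c) ^ 2)) _.
  rewrite (big_morph INR INR_addn (erefl (INR 0))).
  apply: (big_ind2 (fun x y => x <= 4 * Rpower Q T * y)) => [|*|s _]; last exact: per_rank.
    by rewrite /= Rmult_0_r; apply: Rle_refl.
  by rewrite Rmult_plus_distr_l; lra.
have := sum_Rpower_sq_le c b.+1 Q_ge3; have := exp_pos (T * ln Q); rewrite /Rpower.
move: (\big[Rplus/0]_(s < b.+1) _) (exp _) => S E S_le E0; nra.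
Qed.

End RankCounts.

Theorem lemma5 (D : nat) (HD : prime D) (Hodd : odd D) :
  (exists c1 c2 : R, 0 < c1 /\ 0 < c2 /\
     forall A B Rk : nat, (Rk <= minn A B)%nat ->
       c1 * Rpower (INR D) ((INR A + INR B) * INR Rk - INR Rk ^ 2)
         <= INR (full_count D A B Rk)
       /\ INR (full_count D A B Rk)
         <= c2 * Rpower (INR D) ((INR A + INR B) * INR Rk - INR Rk ^ 2))
  /\
  (exists C : R, 0 < C /\
     forall (A B a b r Rk : nat) (Ha : (a <= A)%nat) (Hb : (b <= B)%nat)
            (M : 'M['F_D]_(a, b)),
       \rank M = r ->
       INR (ext_count Rk Ha Hb M)
         <= C * Rpower (INR D)
                 (INR (A + B - b) * INR Rk - INR b * INR r - INR Rk ^ 2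
                  + (INR b - INR a + INR r + INR Rk) ^ 2 / 4)).
Proof.
have q_ge3 : 3 <= INR #|'F_D|.
  have D_gt2 : (2 < D)%nat by rewrite ltn_neqAle prime_gt1 // andbT; apply: contraTneq Hodd => <-.
  by rewrite card_Fp //; move/leP/le_INR: D_gt2; rewrite /=; lra.
have -> : INR D = INR #|'F_D| by rewrite card_Fp.
split.
  exists (/ 4), 2; split; first lra; split; first lra.
  move=> A B k k_le; rewrite /full_count /ext_count.
  rewrite (eq_card (B := [set N : 'M['F_D]_(A, B) | \rank N == k])) => [|N]; last first.
    by rewrite !inE; apply: andb_idr => _; apply/forallP => -[].
  by rewrite Rmult_comm; split; [apply: card_rank_mx_ge | apply: card_rank_mx_le].
exists (8 * INR #|'F_D|); split; first lra.
move=> A B a b r k Ha Hb M <-.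
move: (A - a)%nat (subnKC Ha) => p eA; subst A.
move: (B - b)%nat (subnKC Hb) => p' eB; subst B.
rewrite /ext_count (eq_card (B := [set N | (\rank N == k) && (ulsubmx N == M)])) => [|N]; last first.
  by rewrite !inE ulsubmx_eqE.
rewrite (_ : a + p + (b + p') - b = a + p + p')%nat ?INR_addn; last by rewrite addnCA addKn.
exact: card_rank_ulsubmx_le.
Qed.
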